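(* Let $\mathcal H$ be the Hessian of an admissible Hamiltonian. Then for all $x,y\in\mathbb R^{2n}$, $J(x)\,\mathcal H\,J(y)=J(y)\,\mathcal H\,J(x)$.
   Context: Fix an integer $n\ge 2$. Points of $\mathbb R^{2n}$ are $x=(x_1,\dots,x_{2n})^{T}$; write $u=(x_1,\dots,x_n)^T$. Let $X(u)$ be the $n\times n$ matrix with entries $X(u)_{ij}=x_{k}$ where $k\in\{1,\dots,n\}$, $k\equiv i+j-1 \pmod n$, and let $J(x)=\begin{pmatrix}0&X(u)\\-X(u)&0\end{pmatrix}$. Let $\mathcal P$ be the $n\times n$ cyclic shift matrix ($\mathcal P_{i,i+1}=1$ for $1\le i\le n-1$, $\mathcal P_{n,1}=1$, all other entries $0$) and $A=\begin{pmatrix}\mathcal P&0\\0&\mathcal P\end{pmatrix}$. An admissible Hamiltonian is a homogeneous quadratic form $H(x)=\tfrac12 x^T\mathcal H x$ with a constant symmetric matrix $\mathcal H=\nabla^2H$ satisfying $A\mathcal H=\mathcal H A^T$. *)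

(* The statement is purely algebraic; we state it over an
   arbitrary real field R (R^{2n} with R = the reals is an instance). *)
From HB Require Import structures.
From mathcomp Require Import all_boot all_order all_algebra.
Set Implicit Arguments. Unset Strict Implicit. Unset Printing Implicit Defensive.
Import Order.TTheory GRing.Theory Num.Theory.
Local Open Scope ring_scope.

(* Indices are 0-based: paper index i in {1..n} corresponds to i-1 : 'I_n. *)

(* indexed by nat; out-of-range indices never occur below (value 0 there). *)
Definition ufirst (R : nzRingType) (n : nat) (x : 'cV[R]_(n + n)) (k : nat) : R :=
  if @insub nat (fun k => k < n)%N 'I_n k is Some o then x (lshift n o) 0 else 0.

(* X(u)_{ij} = x_k with k = i + j - 1 (mod n), 1-based; 0-based: k0 = (i0 + j0) mod n. *)
Definition Xmat (R : nzRingType) (n : nat) (x : 'cV[R]_(n + n)) : 'M[R]_n :=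
  \matrix_(i < n, j < n)
     ufirst x (((i : nat) + j) %% n)%N.

Definition Jmat (R : nzRingType) (n : nat) (x : 'cV[R]_(n + n)) : 'M[R]_(n + n) :=
  block_mx 0 (Xmat x) (- Xmat x) 0.

(* cyclic shift: P_{i,i+1} = 1 (1<=i<=n-1), P_{n,1} = 1; 0-based: P i j = [j == (i+1) mod n]. *)
Definition Pshift (R : nzRingType) (n : nat) : 'M[R]_n :=
  \matrix_(i < n, j < n) ((j == (i.+1 %% n)%N :> nat)%:R).

Definition Amat (R : nzRingType) (n : nat) : 'M[R]_(n + n) :=
  block_mx (Pshift R n) 0 0 (Pshift R n).

Definition admissible_hessian (R : nzRingType) (n : nat) (H : 'M[R]_(n + n)) : Prop :=
  H^T = H /\ Amat R n *m H = H *m (Amat R n)^T.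

(* A matrix M intertwining the cyclic shift, P M = M P^T, satisfies
   M (a + 1) b = M a (b + 1), so it is a circulant Hankel matrix
   M a b = g (a + b) over Z/nZ; the same holds for X(u) and for each n x n
   block of an admissible Hessian.  Block multiplication reduces the theorem
   to X(x) M X(y) = X(y) M X(x) for such M, and the (i, j) entry of a product
   of three circulant Hankel matrices with symbols f, g, h is
   sum_(a, b) f a g (a + b - i - j) h b, which is symmetric in f and h. *)
From HB Require Import structures.
From mathcomp Require Import all_boot all_order all_algebra.

Set Implicit Arguments.
Unset Strict Implicit.
Unset Printing Implicit Defensive.
Import Order.TTheory GRing.Theory Num.Theory.
Local Open Scope ring_scope.

Section CirculantHankel.
Variables (R : comNzRingType) (m : nat).
(* Writing n as m.+2 equips 'I_n with its canonical ring structure Z/nZ. *)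
Local Notation n := m.+2.

Definition circ_hankel (f : 'I_n -> R) : 'M[R]_n := \matrix_(i, j) f (i + j).

Lemma Xmat_circ_hankel (x : 'cV[R]_(n + n)) :
  Xmat x = circ_hankel (fun k => x (lshift n k) 0).
Proof.
apply/matrixP => a b; rewrite !mxE /ufirst.
case: insubP => [o _ ho|]; last by rewrite ltn_pmod.
by congr (x (lshift n _) 0); apply: val_inj; rewrite /= ho.
Qed.

Lemma sum_delta_mul (F : 'I_n -> R) (k : 'I_n) : \sum_c (c == k)%:R * F c = F k.
Proof.
by rewrite (bigD1 k) //= eqxx mul1r big1 ?addr0 // => c /negbTE ->; rewrite mul0r.
Qed.

Lemma Pshift_mulmxE (M : 'M[R]_n) a b : (Pshift R n *m M) a b = M (a + 1) b.
Proof.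
rewrite mxE -(sum_delta_mul (M^~ b)); apply: eq_bigr => c _; rewrite mxE.
by congr (_%:R * _); rewrite -val_eqE /= ?modnDmr ?addn1.
Qed.

Lemma mulmx_trPshiftE (M : 'M[R]_n) a b : (M *m (Pshift R n)^T) a b = M a (b + 1).
Proof.
rewrite mxE -(sum_delta_mul (M a)); apply: eq_bigr => c _; rewrite !mxE mulrC.
by congr (_%:R * _); rewrite -val_eqE /= ?modnDmr ?addn1.
Qed.

Lemma shift_intertwined_circ_hankel (M : 'M[R]_n) :
  Pshift R n *m M = M *m (Pshift R n)^T -> M = circ_hankel (M 0).
Proof.
move=> PM_MP.
have step a b : M (a + 1) b = M a (b + 1).
  by rewrite -Pshift_mulmxE PM_MP mulmx_trPshiftE.
have shift k a b : M (a + k%:R) b = M a (b + k%:R).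
  elim: k a b => [|k IH] a b; first by rewrite !addr0.
  by rewrite -natr1 !addrA step IH -!addrA (addrC 1).
apply/matrixP => a b; rewrite mxE.
have -> : a = (val a)%:R :> 'I_n by apply: val_inj; rewrite /= Zp_nat /= modn_small.
by rewrite -[X in M X _]add0r shift addrC.
Qed.

Lemma sum_translate (F : 'I_n -> R) (k : 'I_n) : \sum_a F a = \sum_a F (k + a).
Proof. exact: (reindex_inj (addrI k)). Qed.

Lemma circ_hankel_mulmxE (f g h : 'I_n -> R) i j :
  (circ_hankel f *m circ_hankel g *m circ_hankel h) i j
  = \sum_b \sum_a f a * g (a + b - i - j) * h b.
Proof.
rewrite mxE (sum_translate _ (- j)); apply: eq_bigr => b _.
rewrite !mxE big_distrl (sum_translate _ (- i)) /=; apply: eq_bigr => a _.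
rewrite !mxE; congr (_ * g _ * h _).
- by rewrite addNKr.
- by rewrite addrACA addrC addrA.
- by rewrite addrC addNKr.
Qed.

Lemma circ_hankel_mulmx_rev (f g h : 'I_n -> R) :
  circ_hankel f *m circ_hankel g *m circ_hankel h
  = circ_hankel h *m circ_hankel g *m circ_hankel f.
Proof.
apply/matrixP => i j; rewrite !circ_hankel_mulmxE exchange_big /=.
apply: eq_bigr => b _; apply: eq_bigr => a _.
by rewrite [b + a]addrC mulrC [f b * _]mulrC mulrA.
Qed.

Lemma Xmat_mulmx_comm (x y : 'cV[R]_(n + n)) (M : 'M[R]_n) :
  Pshift R n *m M = M *m (Pshift R n)^T ->
  Xmat x *m M *m Xmat y = Xmat y *m M *m Xmat x.
Proof.
move=> /shift_intertwined_circ_hankel ->.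
by rewrite !Xmat_circ_hankel circ_hankel_mulmx_rev.
Qed.

End CirculantHankel.

Theorem mainTheorem19 (R : realFieldType) (n : nat) (hn : (2 <= n)%N)
  (H : 'M[R]_(n + n)) (hH : admissible_hessian H)
  (x y : 'cV[R]_(n + n)) :
  Jmat x *m H *m Jmat y = Jmat y *m H *m Jmat x.
Proof.
case: n hn H hH x y => [|[|m]] // _ H [_ AH_HA] x y.
rewrite -(submxK H) in AH_HA *.
move: AH_HA; rewrite /Amat tr_block_mx !trmx0 !mulmx_block.
rewrite !mul0mx !mulmx0 !addr0 !add0r => /eq_block_mx [h11 h12 h21 h22].
rewrite !mulNmx !mulmxN.
by rewrite (Xmat_mulmx_comm x y h11) (Xmat_mulmx_comm x y h12)
  (Xmat_mulmx_comm x y h21) (Xmat_mulmx_comm x y h22).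
Qed.
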